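(* For any constants $\mu>0$ and $\kappa>0$, the function $$\eta_g(\varepsilon)=\mu\bigl(1-\kappa\,Q^{-1}(\varepsilon)\bigr)(1-\varepsilon),\qquad \varepsilon\in(0,1),$$ is strictly concave on $(0,1)$; equivalently, $\eta_g''(\varepsilon)<0$ for all $\varepsilon\in(0,1)$.
   Context: $Q(x)=\int_x^\infty \frac{1}{\sqrt{2\pi}}e^{-t^2/2}\,dt$ is the standard normal tail function and $Q^{-1}:(0,1)\to\mathbb{R}$ its inverse. *)

From Stdlib Require Import Reals.
Open Scope R_scope.

Definition phi (t : R) : R := / sqrt (2 * PI) * exp (- t ^ 2 / 2).

Definition is_normal_tail (Q : R -> R) : Prop :=
  forall x eps, 0 < eps -> exists B, forall b (pr : Riemann_integrable phi x b),
    B <= b -> Rabs (RiemannInt pr - Q x) < eps.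

Definition is_inverse_on_01 (Q Qinv : R -> R) : Prop :=
  forall e, 0 < e < 1 -> Q (Qinv e) = e.

Definition strictly_concave_on (a b : R) (f : R -> R) : Prop :=
  forall x y t, a < x < b -> a < y < b -> x <> y -> 0 < t < 1 ->
    t * f x + (1 - t) * f y < f (t * x + (1 - t) * y).

Definition eta_g (mu kappa : R) (Qinv : R -> R) (e : R) : R :=
  mu * (1 - kappa * Qinv e) * (1 - e).

From Stdlib Require Import Reals Lra.
Open Scope R_scope.

(* Write x(e) = Qinv e, so that Q (x e) = e and
     eta_g(e) = mu (1 - e) - mu kappa * W (x e),   W x = x (1 - Q x).
   The first term is affine, so it suffices that e |-> W (x e) is strictly
   convex, i.e. that its secant slopes increase.  Since Q' = - phi, the
   Cauchy mean value theorem gives, for x < y, a point c in (x,y) with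
     W y - W x = H c * (Q x - Q y),   H c = (1 - Q c) / phi c + c,
   so the secant slope of W o Qinv over [Q y, Q x] equals - H c.  The
   function H has derivative 2 + c (1 - Q c) / phi c, which is positive:
   trivially for c >= 0, and for c < 0 by the Mills-ratio bound
   (1 - Q c) (- c) <= phi c.  Hence H is increasing and the slopes of
   W o Qinv increase with e, which yields strict concavity. *)

Lemma deriv_pos_increasing (f f' : R -> R) (a b : R) : a < b ->
  (forall c, a <= c <= b -> derivable_pt_lim f c (f' c)) ->
  (forall c, a < c < b -> 0 < f' c) -> f a < f b.
Proof.
  intros Hab Hf Hpos.
  destruct (MVT_cor2 f f' a b Hab Hf) as [c [E Hc]].
  assert (0 < f' c * (b - a)) by (apply Rmult_lt_0_compat; [apply Hpos; lra | lra]).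
  lra.
Qed.

Lemma deriv_nonneg_nondecreasing (f f' : R -> R) (a b : R) : a < b ->
  (forall c, a <= c <= b -> derivable_pt_lim f c (f' c)) ->
  (forall c, a < c < b -> 0 <= f' c) -> f a <= f b.
Proof.
  intros Hab Hf Hnn.
  destruct (MVT_cor2 f f' a b Hab Hf) as [c [E Hc]].
  assert (0 <= f' c * (b - a)) by (apply Rmult_le_pos; [apply Hnn; lra | lra]).
  lra.
Qed.

Lemma cauchy_mvt (f f' g g' : R -> R) (a b : R) : a < b ->
  (forall c, a <= c <= b -> derivable_pt_lim f c (f' c)) ->
  (forall c, a <= c <= b -> derivable_pt_lim g c (g' c)) ->
  exists c, a < c < b /\ f' c * (g b - g a) = g' c * (f b - f a).
Proof.
  intros Hab Hf Hg.
  destruct (MVT_cor2 (fun t => f t * (g b - g a) - g t * (f b - f a))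
    (fun t => f' t * (g b - g a) - g' t * (f b - f a)) a b Hab) as [c [E Hc]].
  { intros c Hc.
    apply (derivable_pt_lim_minus (fun t => f t * (g b - g a)) (fun t => g t * (f b - f a))).
    - apply derivable_pt_lim_ext with (f := fun t => (g b - g a) * f t); [intro; ring|].
      rewrite Rmult_comm. apply (derivable_pt_lim_scal f). auto.
    - apply derivable_pt_lim_ext with (f := fun t => (f b - f a) * g t); [intro; ring|].
      rewrite Rmult_comm. apply (derivable_pt_lim_scal g). auto. }
  exists c. split; [exact Hc|].
  assert (E0 : (f' c * (g b - g a) - g' c * (f b - f a)) * (b - a) = 0)
    by (rewrite <- E; ring).
  apply Rmult_integral in E0. destruct E0; lra.
Qed.

Lemma gauss_exp_deriv (s t : R) :
  derivable_pt_lim (fun y => exp (s * y ^ 2 / 2)) t (s * t * exp (s * t ^ 2 / 2)).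
Proof.
  assert (Hq : derivable_pt_lim (fun y => s * y ^ 2 / 2) t (s * t)).
  { apply derivable_pt_lim_ext with (f := fun y => s / 2 * y ^ 2); [intro; field|].
    replace (s * t) with (s / 2 * (INR 2 * t ^ pred 2)) by (simpl; field).
    apply (derivable_pt_lim_scal (fun y => y ^ 2)). apply derivable_pt_lim_pow. }
  rewrite Rmult_comm.
  exact (derivable_pt_lim_comp _ exp t _ _ Hq (derivable_pt_lim_exp _)).
Qed.

Lemma sqrt_2pi_pos : 0 < sqrt (2 * PI).
Proof. apply sqrt_lt_R0. generalize PI_RGT_0; lra. Qed.

Lemma phi_pos (t : R) : 0 < phi t.
Proof.
  unfold phi. apply Rmult_lt_0_compat; [apply Rinv_0_lt_compat, sqrt_2pi_pos | apply exp_pos].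
Qed.

Lemma phi_deriv (t : R) : derivable_pt_lim phi t (- t * phi t).
Proof.
  unfold phi.
  apply derivable_pt_lim_ext with
    (f := fun y => / sqrt (2 * PI) * exp ((-1) * y ^ 2 / 2)).
  { intro y. do 2 f_equal. field. }
  replace (- t ^ 2 / 2) with ((-1) * t ^ 2 / 2) by field.
  replace (- t * (/ sqrt (2 * PI) * exp ((-1) * t ^ 2 / 2))) with
    (/ sqrt (2 * PI) * ((-1) * t * exp ((-1) * t ^ 2 / 2))) by ring.
  apply (derivable_pt_lim_scal (fun y => exp ((-1) * y ^ 2 / 2))).
  apply gauss_exp_deriv.
Qed.

(* psi = 1 / phi, which is smooth with psi' = t psi. *)
Definition psi (t : R) : R := sqrt (2 * PI) * exp (t ^ 2 / 2).

Lemma phi_psi (t : R) : phi t * psi t = 1.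
Proof.
  unfold phi, psi. assert (H := sqrt_2pi_pos).
  replace (/ sqrt (2 * PI) * exp (- t ^ 2 / 2) * (sqrt (2 * PI) * exp (t ^ 2 / 2)))
    with ((/ sqrt (2 * PI) * sqrt (2 * PI)) * (exp (- t ^ 2 / 2) * exp (t ^ 2 / 2))) by ring.
  rewrite <- exp_plus. replace (- t ^ 2 / 2 + t ^ 2 / 2) with 0 by field.
  rewrite exp_0. field. lra.
Qed.

Lemma psi_pos (t : R) : 0 < psi t.
Proof. unfold psi. apply Rmult_lt_0_compat; [apply sqrt_2pi_pos | apply exp_pos]. Qed.

Lemma psi_deriv (t : R) : derivable_pt_lim psi t (t * psi t).
Proof.
  unfold psi.
  apply derivable_pt_lim_ext with (f := fun y => sqrt (2 * PI) * exp (1 * y ^ 2 / 2)).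
  { intro y. do 2 f_equal. field. }
  replace (t ^ 2 / 2) with (1 * t ^ 2 / 2) by field.
  replace (t * (sqrt (2 * PI) * exp (1 * t ^ 2 / 2))) with
    (sqrt (2 * PI) * (1 * t * exp (1 * t ^ 2 / 2))) by ring.
  apply (derivable_pt_lim_scal (fun y => exp (1 * y ^ 2 / 2))).
  apply gauss_exp_deriv.
Qed.

Lemma phi_continuous (t : R) : continuity_pt phi t.
Proof. exact (derivable_continuous_pt phi t (exist _ _ (phi_deriv t))). Qed.

Lemma phi_integrable (a b : R) : Riemann_integrable phi a b.
Proof.
  destruct (Rle_dec a b).
  - apply continuity_implies_RiemannInt; [lra|]. intros; apply phi_continuous.
  - apply RiemannInt_P1, continuity_implies_RiemannInt; [lra|].
    intros; apply phi_continuous.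
Qed.

Section NormalTail.

Variable Q : R -> R.
Hypothesis Q_tail : is_normal_tail Q.

Lemma Q_sub (y z : R) : Q y - Q z = RiemannInt (phi_integrable y z).
Proof.
  apply cond_eq. intros eps Heps.
  destruct (Q_tail y (eps / 2)) as [B1 HB1]; [lra|].
  destruct (Q_tail z (eps / 2)) as [B2 HB2]; [lra|].
  set (b := Rmax B1 B2).
  specialize (HB1 b (phi_integrable y b) (Rmax_l _ _)).
  specialize (HB2 b (phi_integrable z b) (Rmax_r _ _)).
  rewrite <- (RiemannInt_P26 (phi_integrable y z) (phi_integrable z b)
                (phi_integrable y b)) in HB1.
  replace (Q y - Q z - RiemannInt (phi_integrable y z)) with
    (- (RiemannInt (phi_integrable y z) + RiemannInt (phi_integrable z b) - Q y)
     + (RiemannInt (phi_integrable z b) - Q z)) by ring.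
  eapply Rle_lt_trans; [apply Rabs_triang|]. rewrite Rabs_Ropp. lra.
Qed.

Lemma Q_deriv (x : R) : derivable_pt_lim Q x (- phi x).
Proof.
  assert (h : x - 1 <= x + 1) by lra.
  assert (C : forall t, x - 1 <= t <= x + 1 -> continuity_pt phi t)
    by (intros; apply phi_continuous).
  apply derivable_pt_lim_locally_ext with
    (f := fun z => Q (x - 1) - primitive h (FTC_P1 h C) z) (a := x - 1) (b := x + 1).
  { lra. }
  { intros z Hz. unfold primitive.
    destruct (Rle_dec (x - 1) z) as [r|r]; [|lra].
    destruct (Rle_dec z (x + 1)) as [r0|r0]; [|lra].
    rewrite (RiemannInt_P5 _ (phi_integrable (x - 1) z)), <- Q_sub. ring. }
  replace (- phi x) with (0 - phi x) by ring.
  apply (derivable_pt_lim_minus (fct_cte (Q (x - 1)))).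
  - apply derivable_pt_lim_const.
  - exact (RiemannInt_P27 h C (x := x) ltac:(lra)).
Qed.

Lemma Q_decreasing (x y : R) : x < y -> Q y < Q x.
Proof.
  intros Hxy.
  enough (- Q x < - Q y) by lra.
  apply (deriv_pos_increasing (fun t => - Q t) phi); [exact Hxy| |].
  - intros c _. rewrite <- (Ropp_involutive (phi c)).
    apply (derivable_pt_lim_opp Q), Q_deriv.
  - intros; apply phi_pos.
Qed.

Lemma Q_lt_reflect (x y : R) : Q x < Q y -> y < x.
Proof.
  intros Hlt. destruct (Rlt_le_dec y x) as [|[r|r]]; auto.
  - apply Q_decreasing in r. lra.
  - subst. lra.
Qed.

(* For y < x < 0 the function t |-> Q t + phi t / (-x) is nondecreasing
   on [y, x], since its derivative phi t (x - t) / (- x) is nonnegative. *)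
Lemma Q_phi_monotone (x y : R) : y < x -> x < 0 ->
  Q y + phi y / (- x) <= Q x + phi x / (- x).
Proof.
  intros Hyx Hx.
  apply (deriv_nonneg_nondecreasing (fun t => Q t + phi t / (- x))
           (fun t => phi t * ((x - t) / (- x)))); [exact Hyx| |].
  - intros c _.
    replace (phi c * ((x - c) / - x)) with (- phi c + (- c * phi c) * / (- x))
      by (field; lra).
    apply (derivable_pt_lim_plus Q (fun t => phi t / - x)); [apply Q_deriv|].
    apply derivable_pt_lim_ext with (f := fun t => / (- x) * phi t); [intro; unfold Rdiv; ring|].
    rewrite Rmult_comm. apply (derivable_pt_lim_scal phi), phi_deriv.
  - intros c Hc. apply Rmult_le_pos; [left; apply phi_pos|].
    apply Rmult_le_pos; [lra | left; apply Rinv_0_lt_compat; lra].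
Qed.

Variable Qinv : R -> R.
Hypothesis Q_Qinv : is_inverse_on_01 Q Qinv.

(* Surjectivity onto (0,1) makes Q come arbitrarily close to 1 to the left
   of any point. *)
Lemma Q_near_one (x eps : R) : 0 < eps -> exists y, y < x /\ 1 - Q y < eps.
Proof.
  intros Heps. destruct (Rlt_le_dec (Q x) 1) as [Hx|Hx].
  - set (d := Rmin (Rmin (eps / 2) ((1 - Q x) / 2)) (1 / 2)).
    assert (Hd : 0 < d /\ d <= eps / 2 /\ d <= (1 - Q x) / 2 /\ d <= 1 / 2).
    { unfold d. repeat split.
      - repeat apply Rmin_pos; lra.
      - eapply Rle_trans; [apply Rmin_l | apply Rmin_l].
      - eapply Rle_trans; [apply Rmin_l | apply Rmin_r].
      - apply Rmin_r. }
    assert (HQy : Q (Qinv (1 - d)) = 1 - d) by (apply Q_Qinv; lra).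
    exists (Qinv (1 - d)). split; [apply Q_lt_reflect|]; lra.
  - exists (x - 1). assert (Q x < Q (x - 1)) by (apply Q_decreasing; lra). lra.
Qed.

Lemma mills_ratio (x : R) : x < 0 -> (1 - Q x) * (- x) <= phi x.
Proof.
  intros Hx.
  assert (Hbound : 1 - Q x <= phi x / (- x)).
  { apply le_epsilon. intros eps Heps.
    destruct (Q_near_one x eps Heps) as [y [Hyx Hy]].
    assert (Hm := Q_phi_monotone x y Hyx Hx).
    assert (0 <= phi y / (- x)) 
      by (left; apply Rdiv_lt_0_compat; [apply phi_pos | lra]).
    lra. }
  apply (Rmult_le_compat_r (- x)) in Hbound; [|lra].
  unfold Rdiv in Hbound. rewrite Rmult_assoc, Rinv_l in Hbound; lra.
Qed.

(* H c = (1 - Q c) / phi c + c, the negative secant slope of W o Qinv. *)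
Definition H (c : R) : R := (1 - Q c) * psi c + c.

Lemma H_deriv (c : R) : derivable_pt_lim H c (2 + c * (1 - Q c) * psi c).
Proof.
  unfold H.
  replace (2 + c * (1 - Q c) * psi c) with
    ((0 - - phi c) * psi c + (1 - Q c) * (c * psi c) + 1)
    by (assert (E := phi_psi c); nra).
  apply (derivable_pt_lim_plus (fun x => (1 - Q x) * psi x) id);
    [|apply derivable_pt_lim_id].
  apply (derivable_pt_lim_mult (fun x => 1 - Q x) psi); [|apply psi_deriv].
  apply (derivable_pt_lim_minus (fct_cte 1) Q); [apply derivable_pt_lim_const | apply Q_deriv].
Qed.

(* H' > 0 wherever Q < 1: clear for c >= 0, and Mills' ratio for c < 0. *)
Lemma H_deriv_pos (c : R) : Q c < 1 -> 0 < 2 + c * (1 - Q c) * psi c.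
Proof.
  intros HQc. assert (Hps := psi_pos c).
  destruct (Rle_dec 0 c).
  - assert (0 <= c * (1 - Q c) * psi c)
      by (apply Rmult_le_pos; [apply Rmult_le_pos|]; lra).
    lra.
  - assert (M := mills_ratio c ltac:(lra)).
    assert (Hmul : (1 - Q c) * - c * psi c <= phi c * psi c)
      by (apply Rmult_le_compat_r; lra).
    rewrite phi_psi in Hmul. lra.
Qed.

Lemma H_increasing (d c : R) : d < c -> Q d < 1 -> H d < H c.
Proof.
  intros Hdc Hd.
  apply (deriv_pos_increasing H (fun k => 2 + k * (1 - Q k) * psi k)); [exact Hdc| |].
  - intros; apply H_deriv.
  - intros k Hk. apply H_deriv_pos.
    assert (Q k < Q d) by (apply Q_decreasing; lra). lra.
Qed.

Lemma W_secant (x y : R) : x < y ->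
  exists c, x < c < y /\ y * (1 - Q y) - x * (1 - Q x) = H c * (Q x - Q y).
Proof.
  intros Hxy.
  destruct (cauchy_mvt (fun t => t * (1 - Q t)) (fun c => (1 - Q c) + c * phi c)
              Q (fun c => - phi c) x y Hxy) as [c [Hc Ec]].
  { intros c _. replace ((1 - Q c) + c * phi c) with (1 * (1 - Q c) + c * (0 - - phi c)) by ring.
    apply (derivable_pt_lim_mult id (fun t => 1 - Q t)); [apply derivable_pt_lim_id|].
    apply (derivable_pt_lim_minus (fct_cte 1) Q); [apply derivable_pt_lim_const | apply Q_deriv]. }
  { intros; apply Q_deriv. }
  exists c. split; [exact Hc|].
  assert (Hphi := phi_pos c).
  assert (HW : (1 - Q c) + c * phi c = H c * phi c).
  { unfold H. rewrite Rmult_plus_distr_r, Rmult_assoc, (Rmult_comm (psi c)), phi_psi. ring. }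
  rewrite HW in Ec.
  apply (Rmult_eq_reg_l (phi c)); [|lra]. nra.
Qed.

Lemma eta_g_concave_ordered (mu kappa e1 e2 t : R) : 0 < mu -> 0 < kappa ->
  0 < e1 -> e1 < e2 -> e2 < 1 -> 0 < t < 1 ->
  t * eta_g mu kappa Qinv e1 + (1 - t) * eta_g mu kappa Qinv e2 <
  eta_g mu kappa Qinv (t * e1 + (1 - t) * e2).
Proof.
  intros Hmu Hk H1 H12 H2 Ht.
  set (m := t * e1 + (1 - t) * e2).
  assert (Hm : e1 < m < e2) by (unfold m; nra).
  unfold eta_g.
  set (x1 := Qinv e1). set (x2 := Qinv e2). set (xm := Qinv m).
  assert (Q1 : Q x1 = e1) by (apply Q_Qinv; lra).
  assert (Q2 : Q x2 = e2) by (apply Q_Qinv; lra).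
  assert (Qm : Q xm = m) by (apply Q_Qinv; lra).
  assert (O1 : xm < x1) by (apply Q_lt_reflect; lra).
  assert (O2 : x2 < xm) by (apply Q_lt_reflect; lra).
  destruct (W_secant xm x1 O1) as [c [Hc Ec]].
  destruct (W_secant x2 xm O2) as [d [Hd Ed]].
  rewrite Q1, Qm in Ec. rewrite Qm, Q2 in Ed.
  assert (Hdc : H d < H c).
  { apply H_increasing; [lra|].
    assert (Q d < Q x2) by (apply Q_decreasing; lra). lra. }
  assert (Hgap : 0 < mu * kappa * t * (1 - t) * (e2 - e1) * (H c - H d))
    by (repeat apply Rmult_lt_0_compat; lra).
  assert (Hdiff : mu * (1 - kappa * xm) * (1 - m)
      - (t * (mu * (1 - kappa * x1) * (1 - e1)) + (1 - t) * (mu * (1 - kappa * x2) * (1 - e2)))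
    = mu * kappa * (t * (x1 * (1 - e1) - xm * (1 - m))
                    - (1 - t) * (xm * (1 - m) - x2 * (1 - e2)))) by (unfold m; ring).
  rewrite Ec, Ed in Hdiff.
  replace (mu * kappa * (t * (H c * (m - e1)) - (1 - t) * (H d * (e2 - m)))) with
    (mu * kappa * t * (1 - t) * (e2 - e1) * (H c - H d)) in Hdiff by (unfold m; ring).
  fold m. lra.
Qed.

End NormalTail.

Lemma strictly_concave_on_ordered (a b : R) (f : R -> R) :
  (forall x y t, a < x -> x < y -> y < b -> 0 < t < 1 ->
     t * f x + (1 - t) * f y < f (t * x + (1 - t) * y)) ->
  strictly_concave_on a b f.
Proof.
  intros Hord x y t Hx Hy Hxy Ht.
  destruct (Rlt_le_dec x y) as [r|r].
  - apply Hord; lra.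
  - assert (C := Hord y x (1 - t) ltac:(lra) ltac:(lra) ltac:(lra) ltac:(lra)).
    replace (t * x + (1 - t) * y) with ((1 - t) * y + (1 - (1 - t)) * x) by ring.
    lra.
Qed.

Theorem mainTheorem2 (Q Qinv : R -> R) (mu kappa : R) :
  is_normal_tail Q -> is_inverse_on_01 Q Qinv ->
  0 < mu -> 0 < kappa ->
  strictly_concave_on 0 1 (eta_g mu kappa Qinv).
Proof.
  intros HQ HI Hmu Hk.
  apply strictly_concave_on_ordered. intros e1 e2 t H1 H12 H2 Ht.
  exact (eta_g_concave_ordered Q HQ Qinv HI mu kappa e1 e2 t Hmu Hk H1 H12 H2 Ht).
Qed.
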